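(* The greedy forward search algorithm with criterion $\widehat G_\infty$ outputs a cross-group ordering $g$ with $$\Delta\mathrm{xAUC}(g)\le\max\Big(\frac{1}{n_1^a},\frac{1}{n_1^b}\Big).$$
   Context: Setting: two disjoint finite groups $a$, $b$ of samples, each sample $u$ having label $Y_u\in\{0,1\}$; $n^a,n^b$ group sizes, $n_1^a,n_0^a$ numbers of label-1/label-0 samples in $a$ (similarly for $b$), all $\ge1$, $k_{a,b}=n_1^an_0^b$, $k_{b,a}=n_0^an_1^b$. Fixed within-group rankings $\mathrm{p}^a=(\mathrm{p}^{a(1)},\dots,\mathrm{p}^{a(n^a)})$, $\mathrm{p}^b=(\mathrm{p}^{b(1)},\dots,\mathrm{p}^{b(n^b)})$. A cross-group ordering is a ranked list of all samples of $a\cup b$ whose restrictions to $a,b$ are $\mathrm{p}^a,\mathrm{p}^b$; $\mathrm{xAUC}_o(a,b)$ is the fraction of pairs (label-1 sample of $a$, label-0 sample of $b$) in which the first is ranked above the second, $\mathrm{xAUC}_o(b,a)$ symmetrically, $\Delta\mathrm{xAUC}(o)=|\mathrm{xAUC}_o(a,b)-\mathrm{xAUC}_o(b,a)|$. An $(i,j)$-partial ordering ($0\le i\le n^a$, $0\le j\le n^b$) is a ranked list of $\mathrm{p}^{a(1)},\dots,\mathrm{p}^{a(i)},\mathrm{p}^{b(1)},\dots,\mathrm{p}^{b(j)}$ preserving within-group orders. $H_{ab}(o)$ = number of pairs $(k,h)$ with $k\le i$, $h\le n^b$, $Y_{\mathrm{p}^{a(k)}}=1$, $Y_{\mathrm{p}^{b(h)}}=0$,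 and either $h>j$ or ($h\le j$ and $\mathrm{p}^{a(k)}$ precedes $\mathrm{p}^{b(h)}$ in $o$); $H_{ba}(o)$ = number of pairs $(h,k)$ with $h\le j$, $k\le n^a$, $Y_{\mathrm{p}^{b(h)}}=1$, $Y_{\mathrm{p}^{a(k)}}=0$, and either $k>i$ or ($k\le i$ and $\mathrm{p}^{b(h)}$ precedes $\mathrm{p}^{a(k)}$ in $o$). $\widehat G_\infty(o)=-|H_{ab}(o)/k_{a,b}-H_{ba}(o)/k_{b,a}|$; for a full ordering it equals $-\Delta\mathrm{xAUC}(o)$. Greedy forward search: start from the empty $(0,0)$-partial ordering $g$. While $g$ is an $(i,j)$-partial ordering with $(i,j)\ne(n^a,n^b)$: if $i<n^a$ and $j<n^b$, replace $g$ by $g\oplus\mathrm{p}^{a(i+1)}$ if $\widehat G_\infty(g\oplus\mathrm{p}^{a(i+1)})\ge\widehat G_\infty(g\oplus\mathrm{p}^{b(j+1)})$ and by $g\oplus\mathrm{p}^{b(j+1)}$ otherwise; if one group is exhausted, append the next element of the other group ($\oplus$ = append at the bottom). Output the final $g$. *)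

From mathcomp Require Import all_boot all_order all_algebra.
Set Implicit Arguments. Unset Strict Implicit. Unset Printing Implicit Defensive.
Import Order.TTheory GRing.Theory Num.Theory.
Local Open Scope ring_scope.

(* The sample ranked k-th (0-indexed) in group a, i.e. p^{a(k+1)},
   is encoded as (true, k); the k-th ranked sample of group b as (false, k).
   Labels are given along the fixed within-group rankings:
   ya`_k = Y_{p^{a(k+1)}}, yb`_h = Y_{p^{b(h+1)}} (true = label 1). *)
Definition sample := (bool * nat)%type.

Definition restr_a (o : seq sample) := [seq x <- o | x.1].
Definition restr_b (o : seq sample) := [seq x <- o | ~~ x.1].

Definition partial_ordering (i j : nat) (o : seq sample) : bool :=
  (restr_a o == [seq (true, k) | k <- iota 0 i]) &&
  (restr_b o == [seq (false, h) | h <- iota 0 j]).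

Definition cross_ordering (ya yb : seq bool) (o : seq sample) : bool :=
  partial_ordering (size ya) (size yb) o.

Definition precedes (o : seq sample) (x y : sample) : bool :=
  (index x o < index y o)%N.

Definition n1 (y : seq bool) : nat := count id y.
Definition n0 (y : seq bool) : nat := count negb y.

Definition xAUC_ab (ya yb : seq bool) (o : seq sample) : rat :=
  (\sum_(k < size ya) \sum_(h < size yb)
     [&& nth false ya k, ~~ nth false yb h & precedes o (true, val k) (false, val h)]
     : nat)%:R / (n1 ya * n0 yb)%:R.

Definition xAUC_ba (ya yb : seq bool) (o : seq sample) : rat :=
  (\sum_(h < size yb) \sum_(k < size ya)
     [&& nth false yb h, ~~ nth false ya k & precedes o (false, val h) (true, val k)]
     : nat)%:R / (n0 ya * n1 yb)%:R.

Definition DeltaxAUC (ya yb : seq bool) (o : seq sample) : rat :=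
  `|xAUC_ab ya yb o - xAUC_ba ya yb o|.

Definition ia (o : seq sample) : nat := size (restr_a o).
Definition jb (o : seq sample) : nat := size (restr_b o).

Definition H_ab (ya yb : seq bool) (o : seq sample) : nat :=
  \sum_(k < size ya) \sum_(h < size yb)
    [&& (val k < ia o)%N, nth false ya k, ~~ nth false yb h &
        (jb o <= val h)%N || ((val h < jb o)%N && precedes o (true, val k) (false, val h))].

Definition H_ba (ya yb : seq bool) (o : seq sample) : nat :=
  \sum_(h < size yb) \sum_(k < size ya)
    [&& (val h < jb o)%N, nth false yb h, ~~ nth false ya k &
        (ia o <= val k)%N || ((val k < ia o)%N && precedes o (false, val h) (true, val k))].

(* criterion \hat G_\infty, with k_{a,b} = n1^a n0^b, k_{b,a} = n0^a n1^b *)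
Definition Ghat (ya yb : seq bool) (o : seq sample) : rat :=
  - `| (H_ab ya yb o)%:R / (n1 ya * n0 yb)%:R
       - (H_ba ya yb o)%:R / (n0 ya * n1 yb)%:R |.

Definition greedy_step (ya yb : seq bool) (g : seq sample) : seq sample :=
  let i := ia g in let j := jb g in
  let ga := rcons g (true, i) in
  let gb := rcons g (false, j) in
  if ((i < size ya) && (j < size yb))%N then
    (if Ghat ya yb gb <= Ghat ya yb ga then ga else gb)
  else if (i < size ya)%N then ga else gb.

(* the loop runs while (i,j) <> (n^a,n^b); each step increases i+j by one,
   so it performs exactly n^a + n^b steps from the empty ordering *)
Definition greedy (ya yb : seq bool) : seq sample :=
  iter (size ya + size yb) (greedy_step ya yb) [::].

From mathcomp Require Import all_boot all_order all_algebra.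
From mathcomp Require Import lra zify.
Import Order.TTheory GRing.Theory Num.Theory.
Local Open Scope ring_scope.

(* Write D(g) = H_ab(g)/k_ab - H_ba(g)/k_ba for the signed
   imbalance of a partial ordering g, so that Ghat(g) = -|D(g)|, D of the
   empty ordering is 0, and D(g) = xAUC_g(a,b) - xAUC_g(b,a) for a full
   ordering g.  Appending the next sample of group a only adds pairs to
   H_ab: D increases by some d in [0, 1/n1^a] (and d = 0 once b is
   exhausted).  Exchanging the roles of a and b (the map [swap]) turns
   H_ba into H_ab and negates D, so appending the next sample of b
   decreases D by some d in [0, 1/n1^b] (d = 0 once a is exhausted).
   When |D| <= M := max(1/n1^a, 1/n1^b), one of the two moves goes
   towards 0 and keeps |D| <= M, hence so does the move of smaller |D|,
   which is the one greedy chooses.  By induction on the number of steps,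
   greedy visits (i,j)-partial orderings with i + j = t and |D| <= M; at
   t = n^a + n^b it is a cross-group ordering with DeltaxAUC = |D| <= M. *)

Lemma partial_ordering_mem {i j g} b k : partial_ordering i j g ->
  ((b, k) \in g) = (if b then k < i else k < j)%N.
Proof.
case/andP => /eqP ga /eqP gb.
have restr_mem (c : bool) : ((c, k) \in g) =
    ((c, k) \in if c then restr_a g else restr_b g).
  by case: c; rewrite mem_filter.
by rewrite restr_mem; case: b; rewrite ?ga ?gb mem_map ?mem_iota // => x y [].
Qed.

Lemma partial_ordering_ia {i j g} : partial_ordering i j g -> ia g = i.
Proof. by case/andP => /eqP ga _; rewrite /ia ga size_map size_iota. Qed.

Lemma partial_ordering_jb {i j g} : partial_ordering i j g -> jb g = j.
Proof. by case/andP => _ /eqP gb; rewrite /jb gb size_map size_iota. Qed.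

Lemma partial_ordering_rcons_a {i j g} : partial_ordering i j g ->
  partial_ordering i.+1 j (rcons g (true, i)).
Proof.
case/andP => /eqP ga /eqP gb; apply/andP; split; apply/eqP.
  by rewrite /restr_a filter_rcons -/(restr_a g) ga -addn1 iotaD map_cat cats1.
by rewrite /restr_b filter_rcons.
Qed.

Lemma partial_ordering_rcons_b {i j g} : partial_ordering i j g ->
  partial_ordering i j.+1 (rcons g (false, j)).
Proof.
case/andP => /eqP ga /eqP gb; apply/andP; split; apply/eqP.
  by rewrite /restr_a filter_rcons.
by rewrite /restr_b filter_rcons -/(restr_b g) gb -addn1 iotaD map_cat cats1.
Qed.

Lemma precedes_rcons_old {g : seq sample} {x y} z : x \in g -> y \in g ->
  precedes (rcons g z) x y = precedes g x y.
Proof. by move=> xg yg; rewrite /precedes -cats1 !index_cat xg yg. Qed.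

Lemma precedes_rcons_new {g : seq sample} {x z} : z \notin g -> x \in g ->
  precedes (rcons g z) x z /\ ~~ precedes (rcons g z) z x.
Proof.
move=> zg xg; rewrite /precedes -cats1 !index_cat xg (negbTE zg) /= eqxx addn0.
by rewrite -leqNgt index_mem xg ltnW ?index_mem.
Qed.

Definition swap (x : sample) : sample := (~~ x.1, x.2).

Lemma swapK : involutive swap.
Proof. by case=> b k; rewrite /swap negbK. Qed.

Lemma restr_a_swap g : restr_a (map swap g) = map swap (restr_b g).
Proof. by rewrite /restr_a /restr_b filter_map. Qed.

Lemma restr_b_swap g : restr_b (map swap g) = map swap (restr_a g).
Proof.
rewrite /restr_a /restr_b filter_map; congr (map _ _).
by apply: eq_filter => -[b k] /=; rewrite negbK.
Qed.

Lemma ia_swap g : ia (map swap g) = jb g.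
Proof. by rewrite /ia restr_a_swap size_map. Qed.

Lemma jb_swap g : jb (map swap g) = ia g.
Proof. by rewrite /jb restr_b_swap size_map. Qed.

Lemma partial_ordering_swap {i j g} :
  partial_ordering i j g -> partial_ordering j i (map swap g).
Proof.
case/andP => /eqP ga /eqP gb.
by rewrite /partial_ordering restr_a_swap restr_b_swap gb ga -!map_comp !eqxx.
Qed.

Lemma precedes_swap g x y :
  precedes (map swap g) (swap x) (swap y) = precedes g x y.
Proof. by rewrite /precedes !index_map //; apply: can_inj swapK. Qed.

Lemma H_ba_swap ya yb g : H_ba ya yb g = H_ab yb ya (map swap g).
Proof.
rewrite /H_ab /H_ba ia_swap jb_swap.
apply: eq_bigr => h _; apply: eq_bigr => k _.
by rewrite -(precedes_swap g (false, _) (true, _)).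
Qed.

Lemma H_ab_swap ya yb g : H_ab ya yb g = H_ba yb ya (map swap g).
Proof. by rewrite H_ba_swap -map_comp (eq_map swapK) map_id. Qed.

Lemma sum_nth_count {T : Type} (x0 : T) (p : pred T) (s : seq T) :
  (\sum_(k < size s) p (nth x0 s k))%N = count p s.
Proof.
elim: s => [|x s IH]; first by rewrite big_ord0.
by rewrite /= big_ord_recl IH.
Qed.

Section Variation.
Variables ya yb : seq bool.

(* Appending a sample of b leaves H_ab unchanged: pairs with a b-sample not
   yet placed are already counted as won by a. *)
Lemma H_ab_rcons_b {i j g} : partial_ordering i j g ->
  H_ab ya yb (rcons g (false, j)) = H_ab ya yb g.
Proof.
move=> po; have po' := partial_ordering_rcons_b po.
rewrite /H_ab (partial_ordering_ia po) (partial_ordering_jb po).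
rewrite (partial_ordering_ia po') (partial_ordering_jb po').
apply: eq_bigr => -[k /= _] _; apply: eq_bigr => -[h /= _] _.
have [ki|//] := ltnP k i; rewrite /=.
have kg : (true, k) \in g by rewrite (partial_ordering_mem _ _ po).
have jg : (false, j) \notin g by rewrite (partial_ordering_mem _ _ po) ltnn.
have [hj|hj|->] := ltngtP h j.
- rewrite ltnS (ltnW hj) precedes_rcons_old //.
  by rewrite (partial_ordering_mem _ _ po).
- by [].
- by rewrite ltnSn (precedes_rcons_new jg kg).1.
Qed.

Definition gain_a (i j : nat) : nat :=
  \sum_(h < size yb) [&& nth false ya i, ~~ nth false yb h & (j <= h)%N].

Lemma H_ab_rcons_a {i j g} : (i < size ya)%N -> partial_ordering i j g ->
  H_ab ya yb (rcons g (true, i)) = (H_ab ya yb g + gain_a i j)%N.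
Proof.
move=> ilt po; have po' := partial_ordering_rcons_a po.
rewrite /H_ab (partial_ordering_ia po) (partial_ordering_jb po).
rewrite (partial_ordering_ia po') (partial_ordering_jb po').
have ig : (true, i) \notin g by rewrite (partial_ordering_mem _ _ po) ltnn.
rewrite (bigD1 (Ordinal ilt)) // [X in (X + _)%N](bigD1 (Ordinal ilt)) //=.
rewrite [X in (_ = X + _ + _)%N]big1 ?add0n => [|h _]; last by rewrite ltnn.
rewrite addnC; congr (_ + _)%N.
  apply: eq_bigr => -[k /= klt] ki; apply: eq_bigr => -[h /= _] _.
  have {}ki : k != i by apply: contraNneq ki => ki; apply/eqP/val_inj.
  have [ki'|ik|eki] := ltngtP k i; last by rewrite eki eqxx in ki.
  - rewrite ltnS (ltnW ki'); have [//|hj] := leqP j h.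
    by rewrite precedes_rcons_old // (partial_ordering_mem _ _ po).
  - by rewrite ltnNge ik.
apply: eq_bigr => -[h /= _] _; rewrite ltnSn /=.
have [hj|//] := ltnP h j.
have hg : (false, h) \in g by rewrite (partial_ordering_mem _ _ po).
by rewrite (negbTE (precedes_rcons_new ig hg).2).
Qed.

End Variation.

Definition imbalance (ya yb : seq bool) (g : seq sample) : rat :=
  (H_ab ya yb g)%:R / (n1 ya * n0 yb)%:R - (H_ba ya yb g)%:R / (n0 ya * n1 yb)%:R.

Lemma Ghat_imbalance ya yb g : Ghat ya yb g = - `|imbalance ya yb g|.
Proof. by []. Qed.

Lemma imbalance_nil ya yb : imbalance ya yb [::] = 0.
Proof.
by rewrite /imbalance /H_ab /H_ba !big1 ?mul0r ?subrr // => ? _; rewrite big1.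
Qed.

Lemma imbalance_swap ya yb g : imbalance ya yb g = - imbalance yb ya (map swap g).
Proof.
rewrite /imbalance -H_ab_swap -H_ba_swap opprB.
by rewrite [(n1 yb * _)%N]mulnC [(n0 yb * _)%N]mulnC.
Qed.

Lemma normalised_count_bound (R : numFieldType) (m : nat) {s c : nat} :
  (0 < c)%N -> (s <= c)%N ->
  0 <= s%:R / (m * c)%:R :> R /\ s%:R / (m * c)%:R <= m%:R^-1 :> R.
Proof.
move=> c_gt0 sc; split; first by rewrite divr_ge0 ?ler0n.
have c_neq0 : (c%:R : R) != 0 by rewrite pnatr_eq0 -lt0n.
apply: (@le_trans _ _ (c%:R / (m * c)%:R)).
  by rewrite ler_wpM2r ?invr_ge0 ?ler0n // ler_nat.
by rewrite natrM invfM mulrCA mulfV ?mulr1.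
Qed.

Lemma imbalance_rcons_a (ya yb : seq bool) {i j g} :
  (0 < n0 yb)%N -> (i < size ya)%N -> partial_ordering i j g ->
  exists d, [/\ imbalance ya yb (rcons g (true, i)) = imbalance ya yb g + d,
     0 <= d, d <= (n1 ya)%:R^-1 & (j = size yb -> d = 0)].
Proof.
move=> n0b ilt po; exists ((gain_a ya yb i j)%:R / (n1 ya * n0 yb)%:R).
have gain_le : (gain_a ya yb i j <= n0 yb)%N.
  rewrite /n0 -(sum_nth_count false) /gain_a; apply: leq_sum => h _.
  by case: (nth false ya i); case: (~~ nth false yb h); case: (j <= h)%N.
have [d_ge0 d_le] := normalised_count_bound rat (n1 ya) n0b gain_le.
split => //.
  rewrite /imbalance (H_ab_rcons_a ya yb ilt po) H_ba_swap map_rcons.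
  rewrite (H_ab_rcons_b yb ya (partial_ordering_swap po)) -H_ba_swap.
  by rewrite natrD mulrDl addrAC.
move=> jn; rewrite /gain_a big1 ?mul0r // => h _.
by rewrite jn leqNgt ltn_ord !andbF.
Qed.

Lemma imbalance_rcons_b (ya yb : seq bool) {i j g} :
  (0 < n0 ya)%N -> (j < size yb)%N -> partial_ordering i j g ->
  exists d, [/\ imbalance ya yb (rcons g (false, j)) = imbalance ya yb g - d,
     0 <= d, d <= (n1 yb)%:R^-1 & (i = size ya -> d = 0)].
Proof.
move=> n0a jlt po.
have [d [step d_ge0 d_le d0]] :=
  imbalance_rcons_a yb ya n0a jlt (partial_ordering_swap po).
exists d; split => //.
by rewrite (imbalance_swap ya yb g) imbalance_swap map_rcons step opprD.
Qed.

Lemma closer_to_zero {R : realDomainType} {D da db M : R} :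
  `|D| <= M -> 0 <= da -> da <= M -> 0 <= db -> db <= M ->
  Num.min `|D + da| `|D - db| <= M.
Proof.
rewrite ler_norml => /andP [DM MD] da0 daM db0 dbM.
rewrite ge_min !ler_norml; have [D0|D0] := lerP 0 D.
- by apply/orP; right; apply/andP; split; lra.
- by apply/orP; left; apply/andP; split; lra.
Qed.

Section Greedy.
Variables ya yb : seq bool.
Hypotheses (n0a : (0 < n0 ya)%N) (n0b : (0 < n0 yb)%N).

Definition bound : rat := Num.max ((n1 ya)%:R^-1) ((n1 yb)%:R^-1).

Definition greedy_invariant (t : nat) (g : seq sample) : Prop :=
  exists i j, [/\ partial_ordering i j g, (i <= size ya)%N, (j <= size yb)%N,
    (i + j = t)%N & `|imbalance ya yb g| <= bound].

Lemma greedy_invariant_step t g : (t < size ya + size yb)%N ->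
  greedy_invariant t g -> greedy_invariant t.+1 (greedy_step ya yb g).
Proof.
move=> t_lt [i [j [po ile jle ij Dle]]]; subst t.
have boundA : (n1 ya)%:R^-1 <= bound by rewrite le_max lexx.
have boundB : (n1 yb)%:R^-1 <= bound by rewrite le_max lexx orbT.
have moveA (ilt : (i < size ya)%N) :
    `|imbalance ya yb (rcons g (true, i))| <= bound ->
    greedy_invariant (i + j).+1 (rcons g (true, i)).
  by exists i.+1, j; split; rewrite ?addSn //; apply: partial_ordering_rcons_a.
have moveB (jlt : (j < size yb)%N) :
    `|imbalance ya yb (rcons g (false, j))| <= bound ->
    greedy_invariant (i + j).+1 (rcons g (false, j)).
  by exists i, j.+1; split; rewrite ?addnS //; apply: partial_ordering_rcons_b.
rewrite /greedy_step (partial_ordering_ia po) (partial_ordering_jb po).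
have [ilt|ige] := ltnP i (size ya); have [jlt|jge] := ltnP j (size yb) => /=.
- have [da [Ea da0 daM _]] := imbalance_rcons_a ya yb n0b ilt po.
  have [db [Eb db0 dbM _]] := imbalance_rcons_b ya yb n0a jlt po.
  have := closer_to_zero Dle da0 (le_trans daM boundA) db0 (le_trans dbM boundB).
  rewrite !Ghat_imbalance lerN2 -Ea -Eb.
  set A := `|imbalance ya yb (rcons g (true, i))|.
  set B := `|imbalance ya yb (rcons g (false, j))|.
  by case: (lerP A B) => _ closer; [apply: (moveA ilt) | apply: (moveB jlt)].
- have [d [E _ _ d0]] := imbalance_rcons_a ya yb n0b ilt po.
  by apply: (moveA ilt); rewrite E d0 ?addr0 //; apply/eqP; rewrite eqn_leq jle.
- have [d [E _ _ d0]] := imbalance_rcons_b ya yb n0a jlt po.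
  by apply: (moveB jlt); rewrite E d0 ?subr0 //; apply/eqP; rewrite eqn_leq ile.
- by move: t_lt; rewrite ltnNge (leq_add ige jge).
Qed.

Lemma greedy_invariant_iter {t} : (t <= size ya + size yb)%N ->
  greedy_invariant t (iter t (greedy_step ya yb) [::]).
Proof.
elim: t => [_|t IH t_lt].
  by exists 0%N, 0%N; split; rewrite // imbalance_nil normr0 le_max invr_ge0 ler0n.
by apply: greedy_invariant_step => //; apply: IH; apply: ltnW.
Qed.

End Greedy.

Lemma DeltaxAUC_imbalance ya yb g :
  cross_ordering ya yb g -> DeltaxAUC ya yb g = `|imbalance ya yb g|.
Proof.
move=> co; rewrite /DeltaxAUC /xAUC_ab /xAUC_ba /imbalance /H_ab /H_ba.
rewrite (partial_ordering_ia co) (partial_ordering_jb co).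
congr (`| _ / _ - _ / _ |); congr (_ %:R);
  apply: eq_bigr => x _; apply: eq_bigr => y _;
  by rewrite !ltn_ord leqNgt ltn_ord.
Qed.

Theorem mainTheorem7 (ya yb : seq bool) :
  (0 < n1 ya)%N -> (0 < n0 ya)%N -> (0 < n1 yb)%N -> (0 < n0 yb)%N ->
  cross_ordering ya yb (greedy ya yb) /\
  DeltaxAUC ya yb (greedy ya yb) <=
    Num.max ((n1 ya)%:R^-1 : rat) ((n1 yb)%:R^-1).
Proof.
move=> _ n0a _ n0b.
have [i [j [po ile jle ij Dle]]] := greedy_invariant_iter ya yb n0a n0b (leqnn _).
have [ei ej] : i = size ya /\ j = size yb by lia.
subst i j; split => //.
by rewrite DeltaxAUC_imbalance.
Qed.
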